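(* Let $E\subseteq\{1,\dots,n\}^2$ and let $Y_1,\dots,Y_k\in\mathbb{S}^n_{++}$ satisfy $(Y_j)_{ab}=0$ for all $(a,b)\notin E$ and all $1\le j\le k$. Then $M(Y_1,\dots,Y_k)_{ab}=0$ for all $(a,b)\notin E$.
   Context: $\mathbb{S}^n_{++}$ denotes the set of real symmetric positive definite $n\times n$ matrices. For $0<\alpha\le\beta$ and $t\in\mathbb{R}$ set $\varphi_{\alpha\beta}(t)=\frac{\beta^t-\alpha^t}{\beta-\alpha}$ and $\psi_{\alpha\beta}(t)=\frac{\beta\alpha^t-\alpha\beta^t}{\beta-\alpha}$ if $\beta>\alpha$, and $\varphi_{\alpha\beta}(t)=t\alpha^{t-1}$, $\psi_{\alpha\beta}(t)=(1-t)\alpha^t$ if $\beta=\alpha$. For $1\le j\le k$ and $X\in\mathbb{S}^n_{++}$, with $\alpha=\lambda_{\min}(Y_jX^{-1})$, $\beta=\lambda_{\max}(Y_jX^{-1})$: $m^j_X=\frac{\log\beta-\log\alpha}{\beta-\alpha}$, $o^j_X=\frac{\beta\log\alpha-\alpha\log\beta}{\beta-\alpha}$ if $\beta>\alpha$, and $m^j_X=1/\alpha$, $o^j_X=\log\alpha-1$ if $\beta=\alpha$. The inductive Thompson mean $M(Y_1,\dots,Y_k)$ is the unique $X\in\mathbb{S}^n_{++}$ solving $\sum_{j=1}^k m^j_XY_j+\big(\sum_{j=1}^k o^j_X\big)X=0$; equivalently, it is the limit, for any $X_1\in\mathbb{S}^n_{++}$, of the sequence $X_{i+1}=\varphi_{\alpha\beta}(\tfrac{1}{i+1})Y_{j(i)}+\psi_{\alpha\beta}(\tfrac{1}{i+1})X_i$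 with $\alpha=\lambda_{\min}(Y_{j(i)}X_i^{-1})$, $\beta=\lambda_{\max}(Y_{j(i)}X_i^{-1})$, where $j(i)\in\{1,\dots,k\}$ satisfies $j(i)\equiv i\pmod k$. *)

From HB Require Import structures.
From mathcomp Require Import all_boot all_order all_algebra.
From mathcomp Require Import classical_sets boolp reals exp.
Set Implicit Arguments. Unset Strict Implicit. Unset Printing Implicit Defensive.
Import Order.TTheory GRing.Theory Num.Theory.
Local Open Scope ring_scope.
Local Open Scope classical_set_scope.

Section ThompsonMean.
Variable R : realType.

Definition posdef (n : nat) (A : 'M[R]_n) : Prop :=
  A^T = A /\ forall v : 'rV[R]_n, v != 0 -> 0 < (v *m A *m v^T) 0 0.

Definition lambda_min (n : nat) (A : 'M[R]_n) : R :=
  inf [set a : R | eigenvalue A a].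
Definition lambda_max (n : nat) (A : 'M[R]_n) : R :=
  sup [set a : R | eigenvalue A a].

Definition mcoef (n : nat) (Yj X : 'M[R]_n) : R :=
  let a := lambda_min (Yj *m invmx X) in
  let b := lambda_max (Yj *m invmx X) in
  if a < b then (ln b - ln a) / (b - a) else a^-1.
Definition ocoef (n : nat) (Yj X : 'M[R]_n) : R :=
  let a := lambda_min (Yj *m invmx X) in
  let b := lambda_max (Yj *m invmx X) in
  if a < b then (b * ln a - a * ln b) / (b - a) else ln a - 1.

Definition thompson_eq (n k : nat) (Y : 'I_k -> 'M[R]_n) (X : 'M[R]_n) : Prop :=
  \sum_(j < k) mcoef (Y j) X *: Y j + (\sum_(j < k) ocoef (Y j) X) *: X = 0.

Definition thompson_mean (n k : nat) (Y : 'I_k -> 'M[R]_n) : 'M[R]_n :=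
  xget 1%:M [set X : 'M[R]_n | posdef X /\ thompson_eq Y X].

End ThompsonMean.

From mathcomp Require Import all_boot all_order all_algebra.
From mathcomp Require Import classical_sets boolp reals exp.
Set Implicit Arguments. Unset Strict Implicit. Unset Printing Implicit Defensive.
Import Order.TTheory GRing.Theory Num.Theory.
Local Open Scope ring_scope.
Local Open Scope classical_set_scope.

(* Let X be a positive definite solution of
     sum_j m^j_X Y_j + (sum_j o^j_X) X = 0.
   Reading this identity at an entry (a,b) outside the common sparsity
   pattern E of the Y_j gives (sum_j o^j_X) X_ab = 0, so it suffices to show
   that sum_j o^j_X <> 0.  For this we prove the dichotomy
     m^j_X > 0   or   (m^j_X = 0 and o^j_X = -1):
   the spectrum of Y_j X^-1 consists of positive numbers and is finite
   (roots of the characteristic polynomial), so when it is nonempty its inf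
   and sup are positive eigenvalues and m^j_X > 0; when it is empty both are
   0 and the coefficients degenerate to 0 and ln 0 - 1 = -1.  If the o-sum
   vanished, a diagonal entry of the equation would be a vanishing sum of
   nonnegative terms m^j_X (Y_j)_aa with (Y_j)_aa > 0, forcing every m^j_X = 0,
   hence every o^j_X = -1 and the o-sum would be -k <> 0.
   The file first proves the finiteness and extremum facts, then the
   positivity facts about positive definite matrices, then the dichotomy and
   the sparsity of solutions; the corollary also handles the default value
   of the mean (the identity, which is diagonal, and E contains the diagonal). *)

Lemma roots_in_seq (R : idomainType) (p : {poly R}) : p != 0 ->
  exists s : seq R, forall x, root p x -> x \in s.
Proof.
move: {2}(size p) (leqnn (size p)) => N; elim: N p => [|N IH] p size_p p_neq0.
  by move: p_neq0; rewrite -size_poly_eq0; move: size_p; rewrite leqn0 => ->.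
have [[x rx]|no_root] := pselect (exists x, root p x); last first.
  by exists [::] => x rx; exfalso; apply: no_root; exists x.
have /factor_theorem [q def_p] := rx.
have q_neq0 : q != 0 by apply: contraNneq p_neq0 => q0; rewrite def_p q0 mul0r.
have size_q : (size q <= N)%N.
  by move: size_p; rewrite def_p size_mul ?polyXsubC_eq0 // size_XsubC addn2.
have [s Hs] := IH q size_q q_neq0.
exists (x :: s) => y; rewrite def_p rootM root_XsubC in_cons.
by case/orP => [/Hs ->|->]; rewrite ?orbT.
Qed.

Lemma eigenvalues_in_seq (F : fieldType) (n : nat) (A : 'M[F]_n) :
  exists s : seq F, forall x, eigenvalue A x -> x \in s.
Proof.
have [s Hs] := roots_in_seq (monic_neq0 (char_poly_monic A)).
by exists s => x; rewrite eigenvalue_root_char; apply: Hs.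
Qed.

Lemma finite_set_has_min (d : Order.disp_t) (T : orderType d) (s : seq T)
    (S : set T) (x0 : T) :
  S `<=` [set x | x \in s] -> S x0 ->
  exists2 m, S m & forall y, S y -> (m <= y)%O.
Proof.
move=> sub Sx0; exists (\big[Order.min/x0]_(x <- s | `[< S x >]) x).
  apply: big_ind => [//|x y Sx Sy|x /asboolP //].
  by rewrite /Order.min; case: ifP.
by move=> y Sy; apply: ge_bigmin_seq; [exact: sub | exact/asboolP].
Qed.

Lemma finite_set_has_max (d : Order.disp_t) (T : orderType d) (s : seq T)
    (S : set T) (x0 : T) :
  S `<=` [set x | x \in s] -> S x0 ->
  exists2 m, S m & forall y, S y -> (y <= m)%O.
Proof.
move=> sub Sx0; exists (\big[Order.max/x0]_(x <- s | `[< S x >]) x).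
  apply: big_ind => [//|x y Sx Sy|x /asboolP //].
  by rewrite /Order.max; case: ifP.
by move=> y Sy; apply: le_bigmax_seq; [exact: sub | exact/asboolP].
Qed.

Lemma finite_set_inf_mem (R : realType) (s : seq R) (S : set R) :
  S `<=` [set x | x \in s] -> S !=set0 -> S (inf S).
Proof.
move=> sub [x0 Sx0]; have [m Sm m_min] := finite_set_has_min sub Sx0.
suff -> : inf S = m by [].
apply/eqP; rewrite eq_le ge_inf //=; last by exists m.
by rewrite lb_le_inf //; exists x0.
Qed.

Lemma finite_set_sup_mem (R : realType) (s : seq R) (S : set R) :
  S `<=` [set x | x \in s] -> S !=set0 -> S (sup S).
Proof.
move=> sub [x0 Sx0]; have [M SM M_max] := finite_set_has_max sub Sx0.
suff -> : sup S = M by [].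
apply/eqP; rewrite eq_le ub_le_sup ?andbT //=; last by exists M.
by rewrite ge_sup //; exists x0.
Qed.

Section PositiveDefinite.
Variables (R : realType) (n : nat).
Implicit Types A X Y : 'M[R]_n.

(* Diagonal entries of a positive definite matrix are positive
   (test the quadratic form on a basis vector). *)
Lemma posdef_diag A (a : 'I_n) : posdef A -> 0 < A a a.
Proof.
move=> [_ A_pos]; have := A_pos (delta_mx (0 : 'I_1) a).
rewrite -(rowE a A) trmx_delta -colE !mxE; apply.
by apply/eqP => /matrixP /(_ 0 a); rewrite !mxE !eqxx; apply/eqP/oner_neq0.
Qed.

(* A positive definite matrix has trivial left kernel, hence is invertible. *)
Lemma posdef_unit A : posdef A -> A \in unitmx.
Proof.
move=> [_ A_pos]; rewrite unitmxE unitfE; apply/det0P => -[v v_neq0 vA].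
by have := A_pos v v_neq0; rewrite vA mul0mx mxE ltxx.
Qed.

(* Every eigenvalue l of Y X^-1 is positive: from v Y = l (v X) we get
   v Y v^T = l (v X v^T) with both quadratic forms positive. *)
Lemma eigenvalue_posdef_gt0 Y X l : posdef Y -> posdef X ->
  eigenvalue (Y *m invmx X) l -> 0 < l.
Proof.
move=> PY PX /eigenvalueP [v vYX v_neq0].
have vY : v *m Y = l *: (v *m X).
  rewrite -[v *m Y](mulmxKV (posdef_unit PX)).
  by rewrite -[v *m Y *m invmx X]mulmxA vYX scalemxAl.
have := PY.2 v v_neq0; rewrite vY -scalemxAl mxE.
by rewrite (pmulr_lgt0 _ (PX.2 v v_neq0)).
Qed.

(* The dichotomy for the coefficients m^j_X and o^j_X: either the spectrum
   of Y X^-1 is nonempty, and then its extreme values are positive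
   eigenvalues making m^j_X positive, or it is empty and the coefficients
   degenerate to 0 and -1. *)
Lemma coef_dichotomy Y X : posdef Y -> posdef X ->
  0 < mcoef Y X \/ (mcoef Y X = 0 /\ ocoef Y X = -1).
Proof.
move=> PY PX; rewrite /mcoef /ocoef /lambda_min /lambda_max.
set S := [set l : R | eigenvalue (Y *m invmx X) l].
have [S_neq0|S_eq0] := pselect (S !=set0); last first.
  have -> : S = set0 by apply/seteqP; split => // x Sx; apply: S_eq0; exists x.
  by right; rewrite inf0 sup0 ltxx invr0 ln0 // sub0r.
have [s Hs] := eigenvalues_in_seq (Y *m invmx X).
have inf_gt0 : 0 < inf S.
  exact: eigenvalue_posdef_gt0 PY PX (finite_set_inf_mem Hs S_neq0).
have sup_gt0 : 0 < sup S.
  exact: eigenvalue_posdef_gt0 PY PX (finite_set_sup_mem Hs S_neq0).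
left; case: ifPn => [lt_inf_sup|_]; last by rewrite invr_gt0.
by rewrite divr_gt0 // subr_gt0 // ltr_ln.
Qed.

Lemma thompson_eq_entry (k : nat) (Y : 'I_k -> 'M[R]_n) X (a b : 'I_n) :
  thompson_eq Y X ->
  \sum_(j < k) mcoef (Y j) X * Y j a b
    + (\sum_(j < k) ocoef (Y j) X) * X a b = 0.
Proof.
move=> /(congr1 (fun M : 'M[R]_n => M a b)); rewrite !mxE summxE => HXab.
by rewrite -[RHS]HXab; congr (_ + _); apply: eq_bigr => j _; rewrite mxE.
Qed.

Lemma ocoef_sum_neq0 (k : nat) (Y : 'I_k -> 'M[R]_n) X :
  (0 < k)%N -> (0 < n)%N -> (forall j, posdef (Y j)) -> posdef X ->
  thompson_eq Y X -> \sum_(j < k) ocoef (Y j) X != 0.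
Proof.
move=> k_gt0 n_gt0 PY PX HX; apply/eqP => osum0.
pose a : 'I_n := Ordinal n_gt0.
have := thompson_eq_entry a a HX; rewrite osum0 mul0r addr0 => /eqP.
rewrite psumr_eq0 => [/allP all0|j _]; last first.
  apply: mulr_ge0; last exact/ltW/posdef_diag.
  by case: (coef_dichotomy (PY j) PX) => [/ltW|[-> _]].
have mcoef0 j : mcoef (Y j) X = 0.
  move: (all0 j (mem_index_enum j)); rewrite implyTb mulf_eq0.
  by rewrite [Y j a a == 0]gt_eqF ?posdef_diag // orbF => /eqP.
have ocoefN1 j : ocoef (Y j) X = -1.
  by case: (coef_dichotomy (PY j) PX) => [|[]//]; rewrite mcoef0 ltxx.
move: osum0; under eq_bigr do rewrite ocoefN1.
rewrite sumr_const card_ord mulNrn => /eqP; rewrite oppr_eq0 pnatr_eq0.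
by rewrite eqn0Ngt k_gt0.
Qed.

Lemma thompson_solution_sparse (k : nat) (Y : 'I_k -> 'M[R]_n) X (a b : 'I_n) :
  (0 < k)%N -> (forall j, posdef (Y j)) -> posdef X -> thompson_eq Y X ->
  (forall j, Y j a b = 0) -> X a b = 0.
Proof.
move=> k_gt0 PY PX HX Yab0.
have n_gt0 : (0 < n)%N := leq_ltn_trans (leq0n a) (ltn_ord a).
have osum_neq0 := ocoef_sum_neq0 k_gt0 n_gt0 PY PX HX.
have msum0 : \sum_(j < k) mcoef (Y j) X * Y j a b = 0.
  by apply: big1 => j _; rewrite Yab0 mulr0.
have /eqP := thompson_eq_entry a b HX.
by rewrite msum0 add0r mulf_eq0 (negPf osum_neq0) => /eqP.
Qed.

End PositiveDefinite.

Theorem corollary4p14 (R : realType) (n k : nat) (E : {set 'I_n * 'I_n})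
  (Y : 'I_k -> 'M[R]_n) :
  (0 < k)%N ->
  (forall j, posdef (Y j)) ->
  (forall j (a b : 'I_n), (a, b) \notin E -> Y j a b = 0) ->
  forall a b : 'I_n, (a, b) \notin E -> thompson_mean Y a b = 0.
Proof.
move=> k_gt0 PY YE a b ab_notin_E.
rewrite /thompson_mean; case: xgetP => [X _ [PX HX]|_].
  by apply: thompson_solution_sparse k_gt0 PY PX HX _ => j; apply: YE.
(* Otherwise the mean is the identity; since each Y_j has a positive
   diagonal, E contains the diagonal and (a, b) is off-diagonal. *)
have diag_in_E (c : 'I_n) : (c, c) \in E.
  apply: contraT => /(YE (Ordinal k_gt0)) Ycc0.
  by have := posdef_diag c (PY (Ordinal k_gt0)); rewrite Ycc0 ltxx.
by rewrite mxE; case: eqP ab_notin_E => // ->; rewrite diag_in_E.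
Qed.
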